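(* Let $X$ be a finite set and $D$ a directed distance on $X$. Then the tight-span $T_D$ is a tree if and only if $D$ has an oriented tree realisation $(\Gamma,\alpha,\mathcal{F})$ such that $\Gamma$ is a directed path.
   Context: A directed distance on $X$ is a map $D:X\times X\to\mathbb{R}_{\ge0}$ with $D(x,x)=0$ (not necessarily symmetric). Let $X_l,X_r$ be two disjoint copies of $X$ (write $x_l,x_r$ for the copies of $x$). $P_D=\{f\in\mathbb{R}^{X_l\cup X_r}:f\ge0,\ f(x_l)+f(y_r)\ge D(x,y)\ \forall x,y\in X\}$ and $T_D$ is the set of minimal elements of $P_D$ for the coordinatewise order; $T_D$ is a polyhedral complex (the union of bounded faces of $P_D$), and ''$T_D$ is a tree'' means it has dimension at most $1$. An oriented tree $\Gamma$ is a directed graph whose underlying undirected graph is a tree; with edge lengths $\alpha:E(\Gamma)\to\mathbb{R}_{\ge0}$, $D_{\Gamma,\alpha}(u,v)$ is the sum of $\alpha(e)$ over edges on the undirected $u$–$v$ path directed from $u$ towards $v$, and $D_{\Gamma,\alpha}(U,W)=\min_{u\in U,w\in W}D_{\Gamma,\alpha}(u,w)$. $(\Gamma,\alpha,\mathcal{F})$, $\mathcal{F}=\{F_x:x\in X\}$ subtrees of $\Gamma$, is an oriented tree realisation of $D$ if $D(x,y)=D_{\Gamma,\alpha}(F_x,F_y)$ for all $x,y$. $\Gamma$ is a directed path if its underlying tree is a path and all edges are oriented in the same direction along it. *)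

From HB Require Import structures.
From mathcomp Require Import all_boot all_order all_algebra.
Set Implicit Arguments. Unset Strict Implicit. Unset Printing Implicit Defensive.
Import Order.TTheory GRing.Theory Num.Theory.
Local Open Scope ring_scope.

Section TightSpan.
Variables (R : realFieldType) (X : finType) (D : X -> X -> R).

Definition directed_distance := (forall x y, 0 <= D x y) /\ (forall x, D x x = 0).

(* Points of R^{X_l \cup X_r}: functions on X + X; inl x = x_l, inr x = x_r. *)
Definition in_PD (f : X + X -> R) : Prop :=
  (forall z, 0 <= f z) /\ (forall x y, D x y <= f (inl x) + f (inr y)).

Definition in_TD (f : X + X -> R) : Prop :=
  in_PD f /\ forall g, in_PD g -> (forall z, g z <= f z) -> g = f.

Definition in_face (S0 : pred (X + X)) (S1 : pred (X * X)) (f : X + X -> R) : Prop :=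
  in_PD f /\ (forall z, S0 z -> f z = 0) /\
  (forall x y, S1 (x, y) -> f (inl x) + f (inr y) = D x y).

Definition face_bounded S0 S1 : Prop :=
  exists M : R, forall f, in_face S0 S1 f -> forall z, `|f z| <= M.

Definition aff_indep3 (p0 p1 p2 : X + X -> R) : Prop :=
  forall a b : R, (forall z, a * (p1 z - p0 z) + b * (p2 z - p0 z) = 0) -> a = 0 /\ b = 0.

Definition face_dim_le1 S0 S1 : Prop :=
  forall p0 p1 p2, in_face S0 S1 p0 -> in_face S0 S1 p1 -> in_face S0 S1 p2 ->
    ~ aff_indep3 p0 p1 p2.

(* T_D is a tree: the polyhedral complex T_D (whose cells are the bounded
   faces of P_D) has dimension at most 1. *)
Definition TD_is_tree : Prop :=
  forall S0 S1, face_bounded S0 S1 -> face_dim_le1 S0 S1.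

End TightSpan.

Section OrientedTree.
Variables (R : realFieldType) (V : finType) (E : rel V).

Definition adj : rel V := fun u v => E u v || E v u.

Definition upath (u w : V) (p : seq V) : bool :=
  [&& path adj u p, last u p == w & uniq (u :: p)].

Definition oriented_tree : Prop :=
  (0 < #|V|)%N /\ (forall u, ~~ E u u) /\ (forall u v, ~~ (E u v && E v u)) /\
  (forall u w, exists p, upath u w p /\ forall q, upath u w q -> q = p).

Fixpoint fwd_len (alpha : V -> V -> R) (u : V) (p : seq V) : R :=
  match p with
  | [::] => 0
  | v :: p' => (if E u v then alpha u v else 0) + fwd_len alpha v p'
  end.

Definition tree_dist (alpha : V -> V -> R) (u w : V) (d : R) : Prop :=
  exists p, upath u w p /\ fwd_len alpha u p = d.

Definition subtree (F : {set V}) : Prop :=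
  F != set0 /\
  forall u w, u \in F -> w \in F -> exists p, upath u w p /\ all (fun v => v \in F) p.

Definition directed_path : Prop :=
  exists s : seq V, uniq s /\ (forall v, v \in s) /\
    forall u v, E u v <-> exists i, (i.+1 < size s)%N /\ nth u s i = u /\ nth u s i.+1 = v.

Definition set_dist (alpha : V -> V -> R) (U W : {set V}) (d : R) : Prop :=
  (exists u w, u \in U /\ w \in W /\ tree_dist alpha u w d) /\
  (forall u w d', u \in U -> w \in W -> tree_dist alpha u w d' -> d <= d').

End OrientedTree.

Definition oriented_tree_realisation (R : realFieldType) (X V : finType)
    (D : X -> X -> R) (E : rel V) (alpha : V -> V -> R) (F : X -> {set V}) : Prop :=
  oriented_tree E /\ (forall u v, E u v -> 0 <= alpha u v) /\
  (forall x, subtree E (F x)) /\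
  (forall x y, set_dist E alpha (F x) (F y) (D x y)).

From HB Require Import structures.
From mathcomp Require Import all_boot all_order all_algebra.
From mathcomp Require Import zify ring lra.
Import Order.TTheory GRing.Theory Num.Theory.
Local Open Scope ring_scope.
Set Implicit Arguments. Unset Strict Implicit. Unset Printing Implicit Defensive.

(* Both sides are shown equivalent to an interval representation
       D x y = max(0, l y - r x),
   in which x is the interval [l x, r x] of a directed line and D x y is the
   forward distance from the right end of x to the left end of y.

   - On a directed path the simple paths are the index segments, so the tree
     distance is max(0, pos w - pos u) for the position pos along the path.  A
     realisation thus gives l y = min pos over F_y and r x = max pos over F_x;
     conversely an interval representation is realised on the path through the
     sorted values of l and r.
   - A nonempty face of P_D is bounded iff each coordinate is fixed to 0 or lies
     in a tight constraint.  Under an interval representation every point of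
     such a face is the point (max(0, t - r x), max(0, l y - t)) of a line, and
     each coordinate is affine in t: faces have dimension at most 1.
   - If T_D is a tree then D satisfies the four-point condition: otherwise a
     parabola of tight points of P_D meets some bounded face in three affinely
     independent points.  The four-point condition in turn gives the interval
     representation l y = col_max y - K, r x = - row_max x, K = max D. *)

Definition line_adj (a b : nat) : bool := (b == a.+1) || (a == b.+1).

Definition line_seg (i j : nat) : seq nat :=
  if (i <= j)%N then iota i.+1 (j - i) else [seq (i - t)%N | t <- iota 1 (i - j)].

Lemma last_iota_succ m k : last m (iota m.+1 k) = (m + k)%N.
Proof. by elim: k m => [|k IH] m /=; rewrite ?addn0 ?IH ?addnS. Qed.

Lemma last_down_seg i k : last i [seq (i - t)%N | t <- iota 1 k] = (i - k)%N.
Proof.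
have := last_map (fun t => i - t)%N (iota 1 k) 0%N.
by rewrite subn0 last_iota_succ add0n.
Qed.

Lemma line_path_monotone i L : path line_adj i L -> uniq (i :: L) ->
  L = iota i.+1 (size L) \/
  ((size L <= i)%N /\ L = [seq (i - t)%N | t <- iota 1 (size L)]).
Proof.
elim: L i => [|a L IH] i; first by left.
rewrite /= => /andP[/orP[/eqP->|/eqP->] hp] /andP[hi hu].
- have [hL|[hs hL]] := IH _ hp hu; first by left; rewrite -hL.
  case: L hL {IH hp hu hs} hi => [|b L] hL hi; first by left.
  by move: hi; rewrite hL /= !inE subSS subn0 eqxx orbT.
- have [hL|[hs hL]] := IH _ hp hu.
    case: L hL {IH hp hu} hi => [|b L] hL hi; first by right; rewrite /= subSS subn0.
    by move: hi; rewrite hL /= !inE eqxx orbT.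
  right; split; first by rewrite /=; lia.
  rewrite /= subSS subn0 {1}hL; congr cons.
  have -> : iota 2 (size L) = map (addn 1) (iota 1 (size L)) by rewrite -iotaDl.
  by rewrite -map_comp; apply: eq_map => t /=; lia.
Qed.

Lemma line_path_seg i j L :
  path line_adj i L -> uniq (i :: L) -> last i L = j -> L = line_seg i j.
Proof.
move=> hp hu hj; rewrite /line_seg.
have [hL|[hs hL]] := line_path_monotone hp hu.
  move: hj; rewrite hL last_iota_succ => <-.
  by rewrite leq_addr; congr iota; lia.
move: hj; rewrite {1}hL last_down_seg => <-; rewrite {1}hL.
case: leqP => h; last by congr map; congr iota; lia.
have -> : size L = 0%N by lia.
by rewrite subn0 subnn.
Qed.

Lemma mem_line_seg i j k : k \in line_seg i j -> (minn i j <= k <= maxn i j)%N.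
Proof.
rewrite /line_seg; case: leqP => h; first by rewrite mem_iota; lia.
by case/mapP=> t; rewrite mem_iota => ht ->; lia.
Qed.

(* Indices in s identify its simple walks with segments of the integer line, so
   D_{Gamma,alpha}(u,w) = max(0, pos w - pos u) with pos the distance from s_0. *)
Section DirectedPath.
Variables (V : finType) (E : rel V) (s : seq V) (v0 : V).
Hypotheses (s_uniq : uniq s) (s_all : forall v, v \in s)
  (s_arcs : forall u v,
     E u v <-> exists i, (i.+1 < size s)%N /\ nth u s i = u /\ nth u s i.+1 = v).

Local Notation idx v := (index v s).

Lemma idx_lt v : (idx v < size s)%N.
Proof. by rewrite index_mem. Qed.

Lemma idx_nth k : (k < size s)%N -> idx (nth v0 s k) = k.
Proof. by move=> hk; rewrite index_uniq. Qed.

Lemma idx_inj : injective (fun v => idx v).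
Proof. by move=> u v h; rewrite -(nth_index v0 (s_all u)) h nth_index. Qed.

Lemma arcE u v : E u v = (idx v == (idx u).+1).
Proof.
apply/idP/eqP => [/s_arcs[i [hi [hu hv]]]|h].
  rewrite -hu -hv !(set_nth_default v0) ?idx_nth //; lia.
apply/s_arcs; exists (idx u); split; first by rewrite -h idx_lt.
by rewrite nth_index // -h nth_index.
Qed.

Lemma adjE u v : adj E u v = line_adj (idx u) (idx v).
Proof. by rewrite /adj /line_adj !arcE. Qed.

Lemma upath_idx u w p : upath E u w p -> map (fun v => idx v) p = line_seg (idx u) (idx w).
Proof.
case/and3P=> hp /eqP hl hu; apply: line_path_seg.
- change (path line_adj ((fun v => idx v) u) (map (fun v => idx v) p)).
  by rewrite path_map (eq_path (e' := adj E)) // => a b; rewrite /= adjE.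
- by rewrite -(map_cons (fun v => idx v)) map_inj_uniq //; exact: idx_inj.
- by rewrite (last_map (fun v => idx v)) hl.
Qed.

Lemma upath_unique u w p q : upath E u w p -> upath E u w q -> p = q.
Proof. by move=> hp hq; apply: (inj_map idx_inj); rewrite (upath_idx hp) (upath_idx hq). Qed.

Lemma upath_between u w p v : upath E u w p -> v \in p ->
  (minn (idx u) (idx w) <= idx v <= maxn (idx u) (idx w))%N.
Proof.
by move=> hp hv; apply: mem_line_seg; rewrite -(upath_idx hp) (map_f (fun v => idx v)).
Qed.

Lemma up_walk u w : (idx u <= idx w)%N ->
  exists p, [/\ path E u p, last u p = w & uniq (u :: p)].
Proof.
move=> huw; have hw := idx_lt w.
exists [seq nth v0 s j | j <- iota (idx u).+1 (idx w - idx u)].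
have hu : nth v0 s (idx u) = u by rewrite nth_index.
have arc_path k m : (m + k < size s)%N ->
    path E (nth v0 s m) [seq nth v0 s j | j <- iota m.+1 k].
  elim: k m => [|k IH] m //= hk.
  by rewrite arcE !idx_nth ?eqxx ?IH //; lia.
split.
- by rewrite -[X in path _ X]hu arc_path //; lia.
- by rewrite -[X in last X]hu last_map last_iota_succ subnKC // nth_index.
- rewrite -[X in uniq (X :: _)]hu -map_cons.
  have -> : idx u :: iota (idx u).+1 (idx w - idx u) = iota (idx u) (idx w - idx u).+1 by [].
  rewrite map_inj_in_uniq ?iota_uniq // => a b.
  rewrite !mem_iota addnS subnKC // => /andP[_ ha] /andP[_ hb] /eqP.
  by rewrite nth_uniq ?(leq_ltn_trans _ hw) // => /eqP.
Qed.

Lemma ex_monotone_upath u w : exists p, upath E u w p /\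
  if (idx u <= idx w)%N then path E u p else path (fun a b => E b a) u p.
Proof.
have fwd_adj a b : E a b -> adj E a b by rewrite /adj => ->.
have bwd_adj a b : E b a -> adj E a b by rewrite /adj orbC => ->.
case: leqP => h.
  have [p [hp hl hu]] := up_walk h; exists p.
  by rewrite /upath (sub_path fwd_adj hp) hl eqxx hu.
have [q [hq hl hu]] := up_walk (ltnW h); exists (rev (belast w q)).
have hr : path (fun a b => E b a) u (rev (belast w q)) by rewrite -hl rev_path.
have hrev : u :: rev (belast w q) = rcons (rev q) w.
  by rewrite -rev_rcons -hl -lastI rev_cons.
rewrite /upath (sub_path bwd_adj hr) -(last_cons w) hrev last_rcons eqxx.
by rewrite -rev_cons rev_uniq.
Qed.

Lemma directed_path_oriented_tree : (0 < #|V|)%N -> oriented_tree E.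
Proof.
move=> hV; split=> //; split; first by move=> u; rewrite arcE; lia.
split; first by move=> u v; rewrite !arcE; apply/negP => /andP[/eqP ? /eqP ?]; lia.
move=> u w; have [p [hp _]] := ex_monotone_upath u w.
by exists p; split=> // q hq; exact: upath_unique hq hp.
Qed.

Section Lengths.
Variables (R : realFieldType) (alpha : V -> V -> R).

Definition pos (v : V) : R := \sum_(k < idx v) alpha (nth v0 s k) (nth v0 s k.+1).

Lemma pos_arc u v : E u v -> pos v = pos u + alpha u v.
Proof.
move=> huv; have h : idx v = (idx u).+1 by apply/eqP; rewrite -arcE.
by rewrite /pos h big_ord_recr /= nth_index // -h nth_index.
Qed.

Lemma fwd_len_forward u p : path E u p -> fwd_len E alpha u p = pos (last u p) - pos u.
Proof.
elim: p u => [|v p IH] u /=; first by rewrite subrr.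
by case/andP=> huv hp; rewrite huv IH // (pos_arc huv); ring.
Qed.

Lemma fwd_len_backward u p : path (fun a b => E b a) u p -> fwd_len E alpha u p = 0.
Proof.
elim: p u => [|v p IH] u //= /andP[hvu hp].
have -> : E u v = false by move: hvu; rewrite !arcE; apply: contraTF => /eqP ->; lia.
by rewrite IH // add0r.
Qed.

Hypothesis alpha_ge0 : forall a b, E a b -> 0 <= alpha a b.

Lemma pos_mono u w : (idx u <= idx w)%N -> pos u <= pos w.
Proof.
case/up_walk=> p [hp <- _]; rewrite -subr_ge0 -fwd_len_forward //.
elim: p u hp => [|v p IH] u //= /andP[huv hp].
by rewrite huv addr_ge0 ?alpha_ge0 ?IH.
Qed.

Lemma tree_dist_pos u w d : tree_dist E alpha u w d <-> d = Num.max 0 (pos w - pos u).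
Proof.
have [p [hp hdir]] := ex_monotone_upath u w.
have -> : Num.max 0 (pos w - pos u) = fwd_len E alpha u p.
  case: leqP hdir => h hdir.
    have /and3P[_ /eqP hl _] := hp.
    by rewrite fwd_len_forward // hl max_r // subr_ge0 pos_mono.
  by rewrite fwd_len_backward // max_l // subr_le0 pos_mono // ltnW.
split=> [[q [hq <-]]|->]; last by exists p.
by rewrite (upath_unique hq hp).
Qed.

End Lengths.
End DirectedPath.

(* D is represented by intervals [l x, r x] of a directed line when D x y is the
   forward distance from the right end of x's interval to the left end of y's. *)
Definition interval_rep (R : realFieldType) (X : finType) (D : X -> X -> R)
  (l r : X -> R) : Prop := forall x y, D x y = Num.max 0 (l y - r x).

(* A realisation on a directed path gives an interval representation: l y is the
   least position in F_y and r x the largest position in F_x. *)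
Lemma realisation_interval_rep (R : realFieldType) (X V : finType) (D : X -> X -> R)
    (E : rel V) (alpha : V -> V -> R) (F : X -> {set V}) :
  oriented_tree_realisation D E alpha F -> directed_path E ->
  exists l r : X -> R, interval_rep D l r.
Proof.
move=> [[hV _] [alpha_ge0 [hF hdist]]] [s [s_uniq [s_all s_arcs]]].
have [v0 _] := card_gt0P hV.
pose p := pos s v0 alpha.
have td := tree_dist_pos v0 s_uniq s_all s_arcs alpha_ge0.
have /fin_all_exists[rv hrv] :
    forall x, exists v, v \in F x /\ forall u, u \in F x -> p u <= p v.
  move=> x; have [u0 hu0] := set0Pn _ (hF x).1.
  by case: (arg_maxP p hu0) => v; exists v.
have /fin_all_exists[lv hlv] :
    forall y, exists v, v \in F y /\ forall w, w \in F y -> p v <= p w.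
  move=> y; have [w0 hw0] := set0Pn _ (hF y).1.
  by case: (arg_minP p hw0) => v; exists v.
exists (p \o lv), (p \o rv) => x y /=.
have [[u [w [hu [hw /td ->]]]] hmin] := hdist x y.
apply/eqP; rewrite eq_le; apply/andP; split.
  by apply: hmin (hrv x).1 (hlv y).1 _; apply/td.
apply: le_max2 => //; have := (hrv x).2 u hu; have := (hlv y).2 w hw; rewrite /p; lra.
Qed.

(* Conversely, an interval representation is realised on the directed path through
   the sorted values of l and r (and 0, so that the path is never empty), with
   F_x the vertices lying in [l x, r x]. *)
Section IntervalRealisation.
Variables (R : realFieldType) (X : finType) (D : X -> X -> R) (l r : X -> R).
Hypotheses (D_dist : directed_distance D) (D_rep : interval_rep D l r).

Let c : seq R := sort <=%R (0 :: [seq l x | x <- enum X] ++ [seq r x | x <- enum X]).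
Let n : nat := size c.
Let coord (i : 'I_n) : R := nth 0 c i.
Let E : rel 'I_n := fun i j => val j == (val i).+1.
Let alpha (i j : 'I_n) : R := coord j - coord i.
Let F (x : X) : {set 'I_n} := [set i | l x <= coord i <= r x].

Lemma n_gt0 : (0 < n)%N.
Proof. by rewrite /n size_sort. Qed.

Lemma coord_mono (i j : 'I_n) : (i <= j)%N -> coord i <= coord j.
Proof.
move=> hij; have c_sorted : sorted <=%R c by apply: sort_sorted; exact: le_total.
by apply: (sorted_leq_nth le_trans lexx 0 c_sorted); rewrite ?inE ?ltn_ord.
Qed.

Lemma ex_coord v : v \in (0 :: [seq l x | x <- enum X] ++ [seq r x | x <- enum X]) ->
  exists i : 'I_n, coord i = v.
Proof.
rewrite -(mem_sort <=%R) => hv; have hi : (index v c < n)%N by rewrite index_mem.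
by exists (Ordinal hi); rewrite /coord /= nth_index.
Qed.

Lemma interval_nonempty x : l x <= r x.
Proof.
have : l x - r x <= D x x by rewrite D_rep le_max lexx orbT.
by rewrite D_dist.2 subr_le0.
Qed.

Lemma enum_arcs (u v : 'I_n) : E u v <-> exists i,
  (i.+1 < size (enum 'I_n))%N /\ nth u (enum 'I_n) i = u /\ nth u (enum 'I_n) i.+1 = v.
Proof.
rewrite size_enum_ord; split=> [/eqP h|[i [hi [<- <-]]]].
  by exists u; rewrite -h ltn_ord !nth_ord_enum.
by rewrite /E /= !nth_enum_ord // ltnW.
Qed.

Lemma enum_all (v : 'I_n) : v \in enum 'I_n.
Proof. by rewrite mem_enum. Qed.

Lemma alpha_ge0 (u v : 'I_n) : E u v -> 0 <= alpha u v.
Proof. by move=> /eqP h; rewrite subr_ge0 coord_mono // h. Qed.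

Lemma tree_dist_coord (u w : 'I_n) d :
  tree_dist E alpha u w d <-> d = Num.max 0 (coord w - coord u).
Proof.
pose v0 := Ordinal n_gt0.
have posE (v : 'I_n) : pos (enum 'I_n) v0 alpha v = coord v - coord v0.
  rewrite /pos index_enum_ord.
  pose step k := alpha (nth v0 (enum 'I_n) k) (nth v0 (enum 'I_n) k.+1).
  rewrite -(big_mkord xpredT step).
  apply: telescope_sumr_eq => // k hk.
  have hv := ltn_ord v.
  by rewrite /step /alpha /coord /= !nth_enum_ord //; lia.
rewrite (tree_dist_pos v0 (enum_uniq _) enum_all enum_arcs alpha_ge0) !posE.
by rewrite opprB addrA subrK.
Qed.

Lemma interval_rep_realisation :
  oriented_tree_realisation D E alpha F /\ directed_path E.
Proof.
have end_points x : exists i j : 'I_n, coord i = l x /\ coord j = r x.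
  have [i hi] : exists i : 'I_n, coord i = l x.
    by apply: ex_coord; rewrite inE mem_cat map_f ?mem_enum ?orbT.
  have [j hj] : exists j : 'I_n, coord j = r x.
    by apply: ex_coord; rewrite inE mem_cat (map_f r) ?mem_enum ?orbT.
  by exists i, j.
split; last first.
  exists (enum 'I_n); split; first exact: enum_uniq.
  by split; [exact: enum_all | exact: enum_arcs].
split.
  apply: (directed_path_oriented_tree (Ordinal n_gt0) (enum_uniq _) enum_all enum_arcs).
  by rewrite card_ord n_gt0.
split; first exact: alpha_ge0.
split=> [x|x y].
  split=> [|u w hu hw].
    have [i [_ [hi _]]] := end_points x; apply/set0Pn; exists i.
    by rewrite inE hi lexx interval_nonempty.
  have [p [hp _]] := ex_monotone_upath (Ordinal n_gt0) (enum_uniq _) enum_all enum_arcs u w.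
  exists p; split=> //; apply/allP => v hv.
  have := upath_between (Ordinal n_gt0) (enum_uniq _) enum_all enum_arcs hp hv.
  rewrite !index_enum_ord => /andP[hmin hmax].
  have between (a b : 'I_n) : (a <= v <= b)%N -> a \in F x -> b \in F x -> v \in F x.
    case/andP=> /coord_mono hav /coord_mono hvb; rewrite !inE.
    by case/andP=> ha _ /andP[_ hb]; rewrite (le_trans ha hav) (le_trans hvb hb).
  have [huw|/ltnW hwu] := leqP u w.
    apply: between hu hw; move: hmin hmax.
    by rewrite (minn_idPl huw) (maxn_idPr huw) => -> ->.
  apply: between hw hu; move: hmin hmax.
  by rewrite (minn_idPr hwu) (maxn_idPl hwu) => -> ->.
have [i [_ [hi _]]] := end_points y; have [_ [j [_ hj]]] := end_points x.
split.
  exists j, i; rewrite !inE hi hj !lexx !interval_nonempty; split=> //; split=> //.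
  by apply/tree_dist_coord; rewrite hi hj D_rep.
move=> u w d; rewrite !inE => /andP[_ hu] /andP[hw _] /tree_dist_coord ->.
by rewrite D_rep; apply: le_max2 => //; lra.
Qed.

Lemma interval_rep_realisable :
  exists (V : finType) (E : rel V) (alpha : V -> V -> R) (F : X -> {set V}),
    oriented_tree_realisation D E alpha F /\ directed_path E.
Proof. by exists 'I_n, E, alpha, F; exact: interval_rep_realisation. Qed.

End IntervalRealisation.

Section BigMax0.
Variables (R : realFieldType) (T : finType).

Lemma bigmax0_ge0 (F : T -> R) : 0 <= \big[Num.max/0]_i F i.
Proof. by rewrite bigmax_idl le_max lexx. Qed.

Lemma bigmax0_attained (F : T -> R) :
  \big[Num.max/0]_i F i = 0 \/ exists i, \big[Num.max/0]_i F i = F i.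
Proof.
apply: (big_ind (fun m => m = 0 \/ exists i, m = F i)).
- by left.
- by move=> a b ha hb; rewrite maxEle; case: ifP.
- by move=> i _; right; exists i.
Qed.

End BigMax0.

Section Maxima.
Variables (R : realFieldType) (X : finType) (D : X -> X -> R).

Definition row_max (x : X) : R := \big[Num.max/0]_w D x w.
Definition col_max (w : X) : R := \big[Num.max/0]_z D z w.
Definition max_value : R := \big[Num.max/0]_(ab : X * X) D ab.1 ab.2.

Lemma le_row_max x w : D x w <= row_max x.
Proof. exact: (le_bigmax 0 (D x)). Qed.

Lemma le_col_max z w : D z w <= col_max w.
Proof. exact: (le_bigmax 0 (fun z => D z w)). Qed.

Lemma le_max_value a b : D a b <= max_value.
Proof. by have := le_bigmax 0 (fun ab : X * X => D ab.1 ab.2) (a, b). Qed.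

Lemma max_value_ge0 : 0 <= max_value.
Proof. exact: bigmax0_ge0. Qed.

Lemma row_max_attained x : row_max x = 0 \/ exists w, row_max x = D x w.
Proof. exact: bigmax0_attained. Qed.

Lemma col_max_attained w : col_max w = 0 \/ exists z, col_max w = D z w.
Proof. exact: bigmax0_attained. Qed.

Lemma max_value_attained : max_value = 0 \/ exists a b, max_value = D a b.
Proof.
case: (bigmax0_attained (fun ab : X * X => D ab.1 ab.2)) => [|[[a b] ?]]; first by left.
by right; exists a, b.
Qed.

Lemma row_max_le x : row_max x <= max_value.
Proof. by apply: bigmax_le => [|w _]; [exact: max_value_ge0 | exact: le_max_value]. Qed.

Lemma col_max_le w : col_max w <= max_value.
Proof. by apply: bigmax_le => [|z _]; [exact: max_value_ge0 | exact: le_max_value]. Qed.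

End Maxima.

(* A coordinate z is covered by the tight sets (S0, S1) of a face
   when it is fixed to 0 or occurs in a tight constraint; a nonempty face is
   bounded exactly when all coordinates are covered. *)
Section Faces.
Variables (R : realFieldType) (X : finType) (D : X -> X -> R).

Definition covered (S0 : pred (X + X)) (S1 : pred (X * X)) (z : X + X) : bool :=
  S0 z || match z with
          | inl x => [exists y, S1 (x, y)]
          | inr y => [exists x, S1 (x, y)]
          end.

(* An uncovered coordinate can be increased without leaving the face. *)
Lemma bounded_face_covered S0 S1 f :
  in_face D S0 S1 f -> face_bounded D S0 S1 -> forall z, covered S0 S1 z.
Proof.
move=> [[f_ge0 f_PD] [f_S0 f_S1]] [M hM] z; apply: contraT => /norP[hz0 hz1].
pose g z' := if z' == z then f z + (`|M| + 1) else f z'.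
have f_le_g z' : f z' <= g z'.
  by rewrite /g; case: eqP => [->|_] //; have := normr_ge0 M; lra.
have g_face : in_face D S0 S1 g.
  split; [split | split].
  - by move=> z'; have := f_le_g z'; have := f_ge0 z'; lra.
  - by move=> a b; have := f_PD a b; have := f_le_g (inl a); have := f_le_g (inr b); lra.
  - move=> z' hz'; rewrite /g; case: eqP => [e|_]; last exact: f_S0.
    by move: hz0; rewrite -e hz'.
  - move=> a b hab; rewrite /g.
    case: eqP => [e|_]; first by move: hz1; rewrite -e /=; case/existsP; exists b.
    case: eqP => [e|_]; first by move: hz1; rewrite -e /=; case/existsP; exists a.
    exact: f_S1.
have fz := f_ge0 z; have M_le := ler_norm M; have M_ge0 := normr_ge0 M.
by have := hM g g_face z; rewrite /g eqxx ger0_norm; lra.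
Qed.

Lemma covered_face_bounded S0 S1 :
  (forall z, covered S0 S1 z) -> face_bounded D S0 S1.
Proof.
move=> hcov; exists (max_value D) => f [[f_ge0 _] [f_S0 f_S1]] z.
rewrite ger0_norm //; case/orP: (hcov z) => [/f_S0 -> |]; first exact: max_value_ge0.
case: z => [a|b] /existsP[w hw]; have := f_S1 _ _ hw.
  by have := f_ge0 (inr w); have := le_max_value D a w; lra.
by have := f_ge0 (inl w); have := le_max_value D w b; lra.
Qed.

Definition face_of (f : X + X -> R) : {set X + X} * {set X * X} :=
  ([set z | f z == 0], [set ab | f (inl ab.1) + f (inr ab.2) == D ab.1 ab.2]).

Lemma in_face_of f g : in_PD D g -> face_of g = face_of f ->
  in_face D (fun z => z \in (face_of f).1) (fun ab => ab \in (face_of f).2) g.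
Proof.
move=> hg <-; split=> //; split=> [z|a b]; rewrite inE; exact: eqP.
Qed.

End Faces.

Section PositivePart.
Variable R : realFieldType.

Lemma max0_cases (a : R) :
  (0 <= a /\ Num.max 0 a = a) \/ (a < 0 /\ Num.max 0 a = 0).
Proof. by case: (lerP 0 a) => h; [left | right]. Qed.

Lemma max0_triangle (a b c : R) :
  a <= b + c -> Num.max 0 a <= Num.max 0 b + Num.max 0 c.
Proof.
move=> h; case: (max0_cases a) => [[? ->]|[? ->]];
  case: (max0_cases b) => [[? ->]|[? ->]]; case: (max0_cases c) => [[? ->]|[? ->]]; lra.
Qed.

Lemma max0_sum_tight (t a b : R) : a < b ->
  Num.max 0 (t - a) + Num.max 0 (b - t) = b - a ->
  Num.max 0 (t - a) = t - a /\ Num.max 0 (b - t) = b - t.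
Proof.
move=> hab; case: (max0_cases (t - a)) => [[? ->]|[? ->]];
  case: (max0_cases (b - t)) => [[? ->]|[? ->]]; lra.
Qed.

End PositivePart.

(* The tight point below an upper bound v for the column coordinates: lower the
   row coordinates as far as feasibility allows, then the column coordinates. *)
Section TightPoint.
Variables (R : realFieldType) (X : finType) (D : X -> X -> R).

Definition row_reduce (v : X -> R) (x : X) : R := \big[Num.max/0]_w (D x w - v w).

Definition col_reduce (u : X -> R) (w : X) : R := \big[Num.max/0]_z (D z w - u z).

Definition tight_point (v : X -> R) (z : X + X) : R :=
  match z with
  | inl x => row_reduce v x
  | inr w => col_reduce (row_reduce v) w
  end.

Lemma col_reduce_ge u z w : D z w - u z <= col_reduce u w.
Proof. exact: (le_bigmax 0 (fun z => D z w - u z)). Qed.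

Lemma tight_point_PD v : in_PD D (tight_point v).
Proof.
split=> [[x|w]|x w] /=; rewrite ?bigmax0_ge0 //.
by have := col_reduce_ge (row_reduce v) x w; lra.
Qed.

Lemma row_reduce_attained v x :
  row_reduce v x = 0 \/ exists w, row_reduce v x = D x w - v w.
Proof. exact: bigmax0_attained. Qed.

Lemma col_reduce_attained u w :
  col_reduce u w = 0 \/ exists z, col_reduce u w = D z w - u z.
Proof. exact: bigmax0_attained. Qed.

Lemma tight_point_covered v : (forall w, 0 <= v w) ->
  forall z, covered (fun z => z \in (face_of D (tight_point v)).1)
                    (fun ab => ab \in (face_of D (tight_point v)).2) z.
Proof.
move=> v_ge0; case=> [x|w]; rewrite /covered /face_of /tight_point /= !inE.
  case: (row_reduce_attained v x) => [->|[w hw]]; first by rewrite eqxx.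
  apply/orP; right; apply/existsP; exists w; rewrite inE /= hw.
  have col_le : col_reduce (row_reduce v) w <= v w.
    apply: bigmax_le => // z _.
    by have := le_bigmax 0 (fun w => D z w - v w) w; rewrite -/(row_reduce v z); lra.
  have col_ge := col_reduce_ge (row_reduce v) x w; rewrite hw in col_ge.
  by apply/eqP; lra.
case: (col_reduce_attained (row_reduce v) w) => [->|[x hx]]; first by rewrite eqxx.
by apply/orP; right; apply/existsP; exists x; rewrite inE /= hx; apply/eqP; ring.
Qed.

End TightPoint.

(* An interval representation makes T_D a tree: every point of a bounded face
   is the point line_point t of the line for some real t, and along such a face
   each coordinate is an affine function of t. *)
Section IntervalTree.
Variables (R : realFieldType) (X : finType) (D : X -> X -> R) (l r : X -> R).
Hypothesis D_rep : interval_rep D l r.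

Definition line_point (t : R) (z : X + X) : R :=
  match z with
  | inl x => Num.max 0 (t - r x)
  | inr y => Num.max 0 (l y - t)
  end.

Lemma covered_point_line S0 S1 f : in_face D S0 S1 f ->
  (forall z, covered S0 S1 z) -> exists t, f =1 line_point t.
Proof.
move=> [[f_ge0 f_PD] [f_S0 f_S1]] hcov.
case: (pickP (@predT X)) => [x1 _|X0]; last by exists 0 => -[x|x]; have := X0 x.
have [t t_le t_ge] : exists2 t, forall x, t - r x <= f (inl x)
                              & forall y, l y - t <= f (inr y).
  have [xm _ xm_min] := arg_minP (fun x => r x + f (inl x)) (erefl : predT x1).
  exists (r xm + f (inl xm)) => [x|y]; first by have := xm_min x erefl; lra.
  have : l y - r xm <= D xm y by rewrite D_rep le_max lexx orbT.
  by have := f_PD xm y; lra.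
have low_l x : Num.max 0 (t - r x) <= f (inl x) by rewrite ge_max f_ge0 t_le.
have low_r y : Num.max 0 (l y - t) <= f (inr y) by rewrite ge_max f_ge0 t_ge.
exists t => -[x|y] /=; apply/eqP; rewrite eq_le ?low_l ?low_r andbT.
  case/orP: (hcov (inl x)) => [/f_S0 -> | /existsP[w /f_S1]]; first by rewrite le_max lexx.
  rewrite D_rep => tight; have := low_r w.
  have : Num.max 0 (l w - r x) <= Num.max 0 (l w - t) + Num.max 0 (t - r x).
    by apply: max0_triangle; lra.
  lra.
case/orP: (hcov (inr y)) => [/f_S0 -> | /existsP[x /f_S1]]; first by rewrite le_max lexx.
rewrite D_rep => tight; have := low_l x.
have : Num.max 0 (l y - r x) <= Num.max 0 (t - r x) + Num.max 0 (l y - t).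
  by apply: max0_triangle; lra.
lra.
Qed.

Lemma face_line_affine S0 S1 z : covered S0 S1 z -> exists c a : R,
  forall f t, in_face D S0 S1 f -> f =1 line_point t -> f z = c * t + a.
Proof.
case/orP=> [hz|].
  by exists 0, 0 => f t [_ [f_S0 _]] _; rewrite f_S0 // mul0r addr0.
case: z => [x|y] /existsP[w hw] /=.
  have [hwx|hxw] := lerP (l w) (r x).
    exists 0, 0 => f t [[f_ge0 _] [_ f_S1]] _; rewrite mul0r addr0.
    have := f_S1 _ _ hw; have := f_ge0 (inr w); have := f_ge0 (inl x); rewrite D_rep.
    by case: (max0_cases (l w - r x)) => [[? ->]|[? ->]]; lra.
  exists 1, (- r x) => f t [_ [_ f_S1]] eft; rewrite mul1r.
  have := f_S1 _ _ hw; rewrite D_rep !eft /=.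
  case: (max0_cases (l w - r x)) => [[_ ->]|[? _]]; last lra.
  by case/max0_sum_tight.
have [hyw|hwy] := lerP (l y) (r w).
  exists 0, 0 => f t [[f_ge0 _] [_ f_S1]] _; rewrite mul0r addr0.
  have := f_S1 _ _ hw; have := f_ge0 (inr y); have := f_ge0 (inl w); rewrite D_rep.
  by case: (max0_cases (l y - r w)) => [[? ->]|[? ->]]; lra.
exists (-1), (l y) => f t [_ [_ f_S1]] eft; rewrite mulN1r addrC.
have := f_S1 _ _ hw; rewrite D_rep !eft /=.
case: (max0_cases (l y - r w)) => [[_ ->]|[? _]]; last lra.
by case/max0_sum_tight.
Qed.

Lemma interval_rep_tree : TD_is_tree D.
Proof.
move=> S0 S1 hbounded p0 p1 p2 h0 h1 h2 hindep.
have hcov := bounded_face_covered h0 hbounded.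
have [t0 e0] := covered_point_line h0 hcov.
have [t1 e1] := covered_point_line h1 hcov.
have [t2 e2] := covered_point_line h2 hcov.
have affine z : exists c a : R,
    [/\ p0 z = c * t0 + a, p1 z = c * t1 + a & p2 z = c * t2 + a].
  have [c [a ca]] := face_line_affine (hcov z).
  by exists c, a; rewrite (ca _ _ h0 e0) (ca _ _ h1 e1) (ca _ _ h2 e2).
have [_ t01] : t2 - t0 = 0 /\ t0 - t1 = 0.
  by apply: hindep => z; have [c [a [-> -> ->]]] := affine z; ring.
have [] := hindep 1 0 => [z|].
  by have [c [a [-> -> _]]] := affine z; rewrite (_ : t1 = t0); [ring | lra].
by move/eqP; rewrite oner_eq0.
Qed.

End IntervalTree.

Lemma pigeonhole3 (I T : finType) (f : I -> T) : (2 * #|T| < #|I|)%N ->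
  exists i j k, [/\ i != j, j != k, i != k, f i = f j & f j = f k].
Proof.
move=> hcard; have [v] : exists v, (2 < #|[set i in I | f i == v]|)%N.
  apply/existsP; apply: contraLR hcard; rewrite negb_exists -leqNgt => /forallP small.
  apply: (@leq_trans (\sum_(w in T) 2)); last by rewrite sum_nat_const mulnC.
  rewrite -[#|I|]sum1_card (partition_big f (fun w => w \in T)) //=.
  by apply: leq_sum => w _; rewrite sum1dep_card leqNgt small.
case/card_gt2P=> [i [j [k [[] ]]]]; rewrite !inE => /eqP fi /eqP fj /eqP fk [hij hjk hki].
by exists i, j, k; rewrite fi fj fk; split; rewrite // eq_sym.
Qed.

Lemma parabola_indep (R : realFieldType) (si sj sk a b : R) :
  si != sj -> sj != sk -> si != sk ->
  a * (sj - si) + b * (sk - si) = 0 ->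
  a * (sj ^+ 2 - si ^+ 2) + b * (sk ^+ 2 - si ^+ 2) = 0 -> a = 0 /\ b = 0.
Proof.
move=> hij hjk hik lin quad.
have : b * ((sk - si) * (sk - sj)) = 0.
  have -> : b * ((sk - si) * (sk - sj)) = a * (sj ^+ 2 - si ^+ 2) + b * (sk ^+ 2 - si ^+ 2)
                                         - (si + sj) * (a * (sj - si) + b * (sk - si)) by ring.
  by rewrite quad lin mulr0 subr0.
move/eqP; rewrite !mulf_eq0 !subr_eq0 (eq_sym sk) (negbTE hik) (eq_sym sk) (negbTE hjk).
rewrite !orbF => /eqP b0.
split=> //; move: lin; rewrite b0 mul0r addr0 => /eqP.
by rewrite mulf_eq0 subr_eq0 (eq_sym sj) (negbTE hij) orbF => /eqP.
Qed.

Lemma parabola_params (R : realFieldType) (A B C E : R) :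
  0 < A -> 0 < B -> 0 <= C -> 0 <= E -> C + E < A + B ->
  exists a0 b0 e : R, 0 < e /\ forall s, 0 < s <= 1 ->
    [/\ 0 <= a0 + e * s, 0 <= b0 + e * s ^+ 2, a0 + e * s <= A, b0 + e * s ^+ 2 <= B &
        E - B <= (a0 + e * s) - (b0 + e * s ^+ 2) <= A - C].
Proof.
move=> A_gt0 B_gt0 C_ge0 E_ge0 hgap.
pose e := Num.min ((A + B - C - E) / 2) (Num.min A B).
have [e_g e_A e_B] : [/\ e <= (A + B - C - E) / 2, e <= A & e <= B].
  by split; rewrite !ge_min lexx //= ?orbT.
have e_gt0 : 0 < e by rewrite !lt_min A_gt0 B_gt0 andbT; lra.
pose m := (A - B + E - C) / 2.
exists (Num.max 0 m), (Num.max 0 (- m)), e; split=> // s /andP[s_gt0 s_le1].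
have es_ge0 : 0 <= e * s by apply: mulr_ge0; exact: ltW.
have es_le : e * s <= e by rewrite ler_piMr // ltW.
have es2_le : e * s ^+ 2 <= e * s by rewrite expr2 mulrA ler_piMr.
have es2_ge0 : 0 <= e * s ^+ 2 by apply: mulr_ge0; [exact: ltW | exact: sqr_ge0].
have m_def : m = (A - B + E - C) / 2 by [].
case: (max0_cases m) => [[? ->]|[? ->]]; case: (max0_cases (- m)) => [[? ->]|[? ->]];
  split; try apply/andP; try split; lra.
Qed.

(* If T_D is a tree, D satisfies the four-point condition.  Otherwise, for a
   violating quadruple (x, y, x', y'), the tight points below the column bound
   "al at y, be at y', maximal elsewhere" have coordinates D x y - al at x_l and
   D x' y' - be at x'_l; along a parabola of admissible (al, be) infinitely many
   such points exist, three of them lie in a common bounded face, and they are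
   affinely independent. *)
Section FourPoint.
Variables (R : realFieldType) (X : finType) (D : X -> X -> R).
Hypotheses (D_ge0 : forall x y, 0 <= D x y) (D_tree : TD_is_tree D).
Variables (x y x' y' : X).
Hypotheses (Dxy_gt0 : 0 < D x y) (Dx'y'_gt0 : 0 < D x' y')
  (violation : D x y' + D x' y < D x y + D x' y').

Definition probe (al be : R) (w : X) : R :=
  if w == y then al else if w == y' then be else col_max D w.

(* The parameters for which the coordinates at x_l and x'_l are as announced. *)
Definition admissible (al be : R) : Prop :=
  [/\ 0 <= al, 0 <= be, al <= D x y, be <= D x' y' &
      D x' y - D x' y' <= al - be <= D x y - D x y'].

Lemma probe_ge0 al be : admissible al be -> forall w, 0 <= probe al be w.
Proof.
case=> al_ge0 be_ge0 _ _ _ w; rewrite /probe.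
by case: eqP => // _; case: eqP => // _; exact: bigmax0_ge0.
Qed.

Lemma probe_col_le al be w z : w != y -> w != y' -> D z w <= probe al be w.
Proof. by rewrite /probe => /negbTE -> /negbTE ->; exact: le_col_max. Qed.

Lemma y_neq_y' : y != y'.
Proof. by apply/eqP => yy'; move: violation; rewrite yy'; lra. Qed.

Lemma row_reduce_probe_x al be : admissible al be ->
  row_reduce D (probe al be) x = D x y - al.
Proof.
case=> al_ge0 be_ge0 al_le be_le /andP[_ hdiff]; apply/eqP; rewrite eq_le; apply/andP; split.
  apply: bigmax_le => [|w _]; first lra.
  rewrite /probe; case: eqP => [->|/eqP wy]; first lra.
  case: eqP => [->|/eqP wy']; first lra.
  by have := probe_col_le al be x wy wy'; rewrite /probe (negbTE wy) (negbTE wy'); lra.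
by have := le_bigmax 0 (fun w => D x w - probe al be w) y; rewrite /probe eqxx.
Qed.

Lemma row_reduce_probe_x' al be : admissible al be ->
  row_reduce D (probe al be) x' = D x' y' - be.
Proof.
case=> al_ge0 be_ge0 al_le be_le /andP[hdiff _]; apply/eqP; rewrite eq_le; apply/andP; split.
  apply: bigmax_le => [|w _]; first lra.
  rewrite /probe; case: eqP => [->|/eqP wy]; first lra.
  case: eqP => [->|/eqP wy']; first lra.
  by have := probe_col_le al be x' wy wy'; rewrite /probe (negbTE wy) (negbTE wy'); lra.
have := le_bigmax 0 (fun w => D x' w - probe al be w) y'.
by rewrite /probe eqxx eq_sym (negbTE y_neq_y').
Qed.

Lemma admissible_curve : exists a0 b0 e : R,
  0 < e /\ forall s, 0 < s <= 1 -> admissible (a0 + e * s) (b0 + e * s ^+ 2).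
Proof. by apply: parabola_params; rewrite ?D_ge0 // addrC. Qed.

Lemma four_point_violation_absurd : False.
Proof.
have [a0 [b0 [e [e_gt0 adm]]]] := admissible_curve.
pose s (t : nat) : R := (1 + t%:R)^-1.
have s_range t : 0 < s t <= 1.
  have t_ge0 : 0 <= t%:R :> R := ler0n R t.
  by rewrite invr_gt0 invf_le1; lra.
have s_inj : injective s by move=> m n /invr_inj /addrI /eqP; rewrite eqr_nat => /eqP.
pose Q t := tight_point D (probe (a0 + e * s t) (b0 + e * s t ^+ 2)).
have Q_x t : Q t (inl x) = D x y - (a0 + e * s t).
  exact: row_reduce_probe_x (adm _ (s_range t)).
have Q_x' t : Q t (inl x') = D x' y' - (b0 + e * s t ^+ 2).
  exact: row_reduce_probe_x' (adm _ (s_range t)).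
have Q_covered t := tight_point_covered D (probe_ge0 (adm _ (s_range t))).
pose n := (2 * #|{: {set X + X} * {set X * X}}|).+1.
have n_large : (2 * #|{: {set X + X} * {set X * X}}| < #|'I_n|)%N by rewrite card_ord.
have [i [j [k [ij jk ik Fij Fjk]]]] := pigeonhole3 (fun t : 'I_n => face_of D (Q t)) n_large.
have F_bounded := covered_face_bounded D (Q_covered i).
have in_F t : face_of D (Q t) = face_of D (Q i) -> _ := in_face_of (tight_point_PD D _).
have := D_tree F_bounded (in_F i erefl) (in_F j (esym Fij)) (in_F k (esym (etrans Fij Fjk))).
apply=> a b hab.
have s_neq (t t' : 'I_n) : t != t' -> s t != s t'.
  by apply: contraNneq => /s_inj /val_inj ->.
move: (hab (inl x)) (hab (inl x')); rewrite /Q in Q_x Q_x'; rewrite !Q_x !Q_x' => hx hx'.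
apply: (parabola_indep (s_neq _ _ ij) (s_neq _ _ jk) (s_neq _ _ ik)).
  by apply: (mulfI (lt0r_neq0 e_gt0)); rewrite mulr0; lra.
by apply: (mulfI (lt0r_neq0 e_gt0)); rewrite mulr0; lra.
Qed.

End FourPoint.

Lemma four_point_condition (R : realFieldType) (X : finType) (D : X -> X -> R) :
  (forall x y, 0 <= D x y) -> TD_is_tree D ->
  forall x y x' y', 0 < D x y -> 0 < D x' y' -> D x y + D x' y' <= D x y' + D x' y.
Proof.
move=> D_ge0 D_tree x y x' y' hxy hx'y'; rewrite leNgt; apply/negP => violation.
exact: (four_point_violation_absurd D_ge0 D_tree hxy hx'y' violation).
Qed.

Lemma four_point_interval_rep (R : realFieldType) (X : finType) (D : X -> X -> R) :
  (forall x y, 0 <= D x y) ->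
  (forall x y x' y', 0 < D x y -> 0 < D x' y' -> D x y + D x' y' <= D x y' + D x' y) ->
  interval_rep D (fun y => col_max D y - max_value D) (fun x => - row_max D x).
Proof.
move=> D_ge0 D_4pc x y; have K_ge0 := max_value_ge0 D; have D_le_K := le_max_value D.
apply/eqP; rewrite eq_le; apply/andP; split.
  rewrite le_max; case: (lerP (D x y) 0) => //= hxy.
  case: (max_value_attained D) => [K0|[x0 [y0 K_att]]].
    by have := D_le_K x y; rewrite K0; lra.
  have hK : 0 < D x0 y0 by rewrite -K_att; have := D_le_K x y; lra.
  have := D_4pc _ _ _ _ hxy hK; have := le_row_max D x y0; have := le_col_max D x0 y.
  by rewrite K_att; lra.
rewrite ge_max D_ge0 /=; have := row_max_le D x; have := col_max_le D y.
case: (row_max_attained D x) => [-> | [w ->]]; first by have := D_ge0 x y; lra.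
case: (col_max_attained D y) => [-> | [z ->]]; first by have := D_ge0 x y; lra.
case: (lerP (D x w) 0) => hxw; first by have := D_ge0 x y; lra.
case: (lerP (D z y) 0) => hzy; first by have := D_ge0 x y; lra.
by have := D_4pc _ _ _ _ hxw hzy; have := D_le_K z w; lra.
Qed.

Unset Implicit Arguments.
Theorem mainTheorem12 (R : realFieldType) (X : finType) (D : X -> X -> R) :
  directed_distance D ->
  (TD_is_tree D <->
   exists (V : finType) (E : rel V) (alpha : V -> V -> R) (F : X -> {set V}),
     oriented_tree_realisation D E alpha F /\ directed_path E).
Proof.
move=> D_dist; split=> [D_tree | [V [E [alpha [F [D_real E_path]]]]]].
  have D_4pc := four_point_condition D_dist.1 D_tree.
  exact: interval_rep_realisable D_dist (four_point_interval_rep D_dist.1 D_4pc).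
have [l [r D_rep]] := realisation_interval_rep D_real E_path.
exact: interval_rep_tree D_rep.
Qed.
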